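(* Let $\mathcal{T}$ be a triangulated category with countable coproducts and $Z\in\mathcal{T}$. Suppose $0=Y_0\xrightarrow{f_0}Y_1\xrightarrow{f_1}Y_2\to\cdots$ is a countable direct system in $\mathcal{T}$ where each $f_i$ lies in a triangle $Y_i\xrightarrow{f_i}Y_{i+1}\to S_i\to\Sigma Y_i$ with $S_i\in{}^\perp Z$. Then $\operatorname{hocolim}Y_i\in{}^\perp Z$.
   Context: ${}^\perp Z=\{A\in\mathcal{T}\mid\mathcal{T}(A,Z)=0\}$. The homotopy colimit of a sequence $Y_0\xrightarrow{f_0}Y_1\to\cdots$ is the object $\operatorname{hocolim}Y_i$ in a triangle $\coprod Y_i\xrightarrow{1-\coprod f_i}\coprod Y_i\to\operatorname{hocolim}Y_i\to\Sigma\coprod Y_i$. *)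

From HB Require Import structures.
From mathcomp Require Import all_boot all_algebra.
Set Implicit Arguments.
Unset Strict Implicit.
Unset Printing Implicit Defensive.
Import GRing.Theory.
Local Open Scope ring_scope.

Record Cat := {
  Obj :> Type;
  Mor : Obj -> Obj -> zmodType;
  comp : forall X Y Z : Obj, Mor Y Z -> Mor X Y -> Mor X Z;
  idm : forall X : Obj, Mor X X }.

Arguments Mor {c}.
Arguments comp {c X Y Z}.
Arguments idm {c}.
Notation "g \oc f" := (comp g f) (at level 40, left associativity).

Definition preadditive (C : Cat) : Prop :=
  (forall (W X Y Z : C) (h : Mor Y Z) (g : Mor X Y) (f : Mor W X),
      h \oc (g \oc f) = (h \oc g) \oc f)
  /\ (forall (X Y : C) (f : Mor X Y), idm Y \oc f = f /\ f \oc idm X = f)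
  /\ (forall (X Y Z : C) (g1 g2 : Mor Y Z) (f : Mor X Y),
        (g1 + g2) \oc f = g1 \oc f + g2 \oc f)
  /\ (forall (X Y Z : C) (g : Mor Y Z) (f1 f2 : Mor X Y),
        g \oc (f1 + f2) = g \oc f1 + g \oc f2).

Definition is_iso (C : Cat) (X Y : C) (f : Mor X Y) : Prop :=
  exists g : Mor Y X, g \oc f = idm X /\ f \oc g = idm Y.

Definition is_zero_obj (C : Cat) (O : C) : Prop :=
  (forall (X : C) (u : Mor O X), u = 0) /\ (forall (X : C) (u : Mor X O), u = 0).

Definition is_coproduct (C : Cat) (I : Type) (Y : I -> C) (P : C)
    (iota : forall i, Mor (Y i) P) : Prop :=
  forall (W : C) (phi : forall i, Mor (Y i) W),
    exists! u : Mor P W, forall i, u \oc iota i = phi i.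
Arguments is_coproduct {C I} Y P iota.

Definition has_binary_coproducts (C : Cat) : Prop :=
  forall (A B : C), exists (P : C) (iota : forall b : bool, Mor (if b then A else B) P),
    is_coproduct (fun b : bool => if b then A else B) P iota.

Definition has_countable_coproducts (C : Cat) : Prop :=
  forall Y : nat -> C, exists (P : C) (iota : forall i, Mor (Y i) P),
    is_coproduct Y P iota.

Definition additive (C : Cat) : Prop :=
  preadditive C /\ (exists O : C, is_zero_obj O) /\ has_binary_coproducts C.

Record TriData := {
  cat :> Cat;
  Sig : cat -> cat;
  Sigm : forall X Y : cat, Mor X Y -> Mor (Sig X) (Sig Y);
  dist : forall X Y Z : cat, Mor X Y -> Mor Y Z -> Mor Z (Sig X) -> Prop }.

Arguments Sig {t}.
Arguments Sigm {t X Y}.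
Arguments dist {t X Y Z}.

Definition shift_ok (T : TriData) : Prop :=
  (forall X : T, Sigm (idm X) = idm (Sig X))
  /\ (forall (X Y Z : T) (g : Mor Y Z) (f : Mor X Y), Sigm (g \oc f) = Sigm g \oc Sigm f)
  /\ (forall (X Y : T) (f g : Mor X Y), Sigm (f + g) = Sigm f + Sigm g)
  /\ (forall X Y : T, bijective (@Sigm T X Y))
  /\ (forall Y : T, exists (X : T) (u : Mor (Sig X) Y), is_iso u).

Definition TR1 (T : TriData) : Prop :=
  (forall (X Y Z X' Y' Z' : T) (f : Mor X Y) (g : Mor Y Z) (h : Mor Z (Sig X))
      (f' : Mor X' Y') (g' : Mor Y' Z') (h' : Mor Z' (Sig X'))
      (a : Mor X X') (b : Mor Y Y') (c : Mor Z Z'),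
      is_iso a -> is_iso b -> is_iso c ->
      b \oc f = f' \oc a -> c \oc g = g' \oc b -> Sigm a \oc h = h' \oc c ->
      dist f g h -> dist f' g' h')
  /\ (forall (O : T), is_zero_obj O -> forall X : T,
        dist (idm X) (0 : Mor X O) (0 : Mor O (Sig X)))
  /\ (forall (X Y : T) (f : Mor X Y),
        exists (Z : T) (g : Mor Y Z) (h : Mor Z (Sig X)), dist f g h).

Definition TR2 (T : TriData) : Prop :=
  forall (X Y Z : T) (f : Mor X Y) (g : Mor Y Z) (h : Mor Z (Sig X)),
    dist f g h <-> dist g h (- Sigm f).

Definition TR3 (T : TriData) : Prop :=
  forall (X Y Z X' Y' Z' : T) (f : Mor X Y) (g : Mor Y Z) (h : Mor Z (Sig X))
      (f' : Mor X' Y') (g' : Mor Y' Z') (h' : Mor Z' (Sig X'))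
      (a : Mor X X') (b : Mor Y Y'),
    dist f g h -> dist f' g' h' -> b \oc f = f' \oc a ->
    exists c : Mor Z Z', c \oc g = g' \oc b /\ Sigm a \oc h = h' \oc c.

Definition TR4 (T : TriData) : Prop :=
  forall (X Y Z Z' X' Y' : T) (f : Mor X Y) (g : Mor Y Z)
      (a1 : Mor Y Z') (b1 : Mor Z' (Sig X))
      (a2 : Mor Z X') (b2 : Mor X' (Sig Y))
      (a3 : Mor Z Y') (b3 : Mor Y' (Sig X)),
    dist f a1 b1 -> dist g a2 b2 -> dist (g \oc f) a3 b3 ->
    exists (u : Mor Z' Y') (v : Mor Y' X'),
      dist u v (Sigm a1 \oc b2)
      /\ u \oc a1 = a3 \oc g /\ b3 \oc u = b1
      /\ v \oc a3 = a2 /\ b2 \oc v = Sigm f \oc b3.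

Definition triangulated (T : TriData) : Prop :=
  additive T /\ shift_ok T /\ TR1 T /\ TR2 T /\ TR3 T /\ TR4 T.

Definition left_orth (T : Cat) (Z A : T) : Prop := forall u : Mor A Z, u = 0.

(* Every [Y i] lies in ^perp Z by induction along the triangles, hence so does
   the coproduct [P].  A map [u : H -> Z] therefore kills [p], so it factors as
   [w \oc q] with [w : Sig P -> Z].  Writing [Z = Sig Z'], it suffices that
   precomposition with [d] is onto [T(P, Z') = prod_i T(Y i, Z')], because then
   [w] factors through [Sigm d] and [Sigm d \oc q = 0].  Each [f i] induces a
   surjection [T(Y i.+1, Z') -> T(Y i, Z')] (its obstruction lives in
   [T(S i, Z) = 0]), and with these one solves [c i - c i.+1 \oc f i = psi i]
   recursively: the relevant lim^1 vanishes. *)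
From HB Require Import structures.
From mathcomp Require Import all_boot all_algebra.
From Stdlib Require Import ClassicalEpsilon.
Import GRing.Theory.
Local Open Scope ring_scope.

Set Implicit Arguments.
Unset Strict Implicit.

Section Preadditive.
Variable C : Cat.
Hypothesis HC : preadditive C.

Lemma compA (W X Y Z : C) (h : Mor Y Z) (g : Mor X Y) (f : Mor W X) :
  h \oc (g \oc f) = (h \oc g) \oc f.
Proof. by case: HC => A _; apply: A. Qed.

Lemma comp_idl (X Y : C) (f : Mor X Y) : idm Y \oc f = f.
Proof. by case: HC => _ [A _]; case: (A _ _ f). Qed.

Lemma compDl (X Y Z : C) (g1 g2 : Mor Y Z) (f : Mor X Y) :
  (g1 + g2) \oc f = g1 \oc f + g2 \oc f.
Proof. by case: HC => _ [_ [A _]]; apply: A. Qed.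

Lemma compDr (X Y Z : C) (g : Mor Y Z) (f1 f2 : Mor X Y) :
  g \oc (f1 + f2) = g \oc f1 + g \oc f2.
Proof. by case: HC => _ [_ [_ A]]; apply: A. Qed.

Lemma comp0l (X Y Z : C) (f : Mor X Y) : (0 : Mor Y Z) \oc f = 0.
Proof.
have := compDl (0 : Mor Y Z) 0 f; rewrite addr0.
by move/(congr1 (fun z => z - 0 \oc f)); rewrite subrr addrK.
Qed.

Lemma comp0r (X Y Z : C) (g : Mor Y Z) : g \oc (0 : Mor X Y) = 0.
Proof.
have := compDr g (0 : Mor X Y) 0; rewrite addr0.
by move/(congr1 (fun z => z - g \oc 0)); rewrite subrr addrK.
Qed.

Lemma compNl (X Y Z : C) (g : Mor Y Z) (f : Mor X Y) : (- g) \oc f = - (g \oc f).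
Proof.
have E := compDl g (- g) f; rewrite subrr comp0l in E.
by apply/eqP; rewrite -addr_eq0 addrC -E.
Qed.

Lemma compNr (X Y Z : C) (g : Mor Y Z) (f : Mor X Y) : g \oc (- f) = - (g \oc f).
Proof.
have E := compDr g f (- f); rewrite subrr comp0r in E.
by apply/eqP; rewrite -addr_eq0 addrC -E.
Qed.

Lemma coproduct_hom_ext (I : Type) (Y : I -> C) (P : C)
    (iota : forall i, Mor (Y i) P) (W : C) (c1 c2 : Mor P W) :
  is_coproduct Y P iota -> (forall i, c1 \oc iota i = c2 \oc iota i) -> c1 = c2.
Proof.
move=> Hcop E; have [u [_ uniq_u]] := Hcop W (fun i => c1 \oc iota i).
by rewrite -(uniq_u c1) // -(uniq_u c2).
Qed.

Lemma left_orth_coproduct (I : Type) (Y : I -> C) (P : C)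
    (iota : forall i, Mor (Y i) P) (Z : C) :
  is_coproduct Y P iota -> (forall i, left_orth Z (Y i)) -> left_orth Z P.
Proof.
move=> Hcop HY u; apply: (coproduct_hom_ext Hcop) => i.
by rewrite comp0l; apply: HY.
Qed.

Lemma left_orth_iso (Z1 Z2 A : C) (v : Mor Z1 Z2) :
  is_iso v -> left_orth Z2 A -> left_orth Z1 A.
Proof.
case=> vi [vK _] HA x.
by rewrite -[x]comp_idl -vK -compA (HA (v \oc x)) comp0r.
Qed.

End Preadditive.

Section Telescope.
Variables (C : Cat) (Y : nat -> C) (f : forall i, Mor (Y i) (Y i.+1)).
Variables (P : C) (iota : forall i, Mor (Y i) P) (d : Mor P P).
Hypothesis HC : preadditive C.
Hypothesis Hcop : is_coproduct Y P iota.
Hypothesis Hd : forall i, d \oc iota i = iota i - iota i.+1 \oc f i.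

Lemma telescope_precomp_surj (W : C) :
  (forall i (a : Mor (Y i) W), exists b, a = b \oc f i) ->
  forall w : Mor P W, exists c, w = c \oc d.
Proof.
move=> Hext w.
have [ext extK] : exists ext : forall i, Mor (Y i) W -> Mor (Y i.+1) W,
    forall i a, a = ext i a \oc f i.
  exists (fun i a => proj1_sig (constructive_indefinite_description _ (Hext i a))).
  by move=> i a; case: constructive_indefinite_description.
pose c := fix c (i : nat) : Mor (Y i) W :=
  if i is n.+1 then ext n (c n - w \oc iota n) else 0.
have cS i : c i.+1 \oc f i = c i - w \oc iota i by rewrite /= -extK.
have [cc [ccK _]] := Hcop c.
exists cc; apply: (coproduct_hom_ext Hcop) => i.
by rewrite -compA // Hd compDr // compNr // compA // !ccK cS opprB addrC subrK.
Qed.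

End Telescope.

Section Triangulated.
Variable T : TriData.
Hypothesis HT : triangulated T.

Let HC : preadditive T := proj1 (proj1 HT).
Let shiftT : shift_ok T := proj1 (proj2 HT).
Let tr1 : TR1 T := proj1 (proj2 (proj2 HT)).
Let tr2 : TR2 T := proj1 (proj2 (proj2 (proj2 HT))).
Let tr3 : TR3 T := proj1 (proj2 (proj2 (proj2 (proj2 HT)))).

Lemma SigmM (X Y Z : T) (g : Mor Y Z) (f : Mor X Y) :
  Sigm (g \oc f) = Sigm g \oc Sigm f.
Proof. by case: shiftT => _ [A _]; apply: A. Qed.

Lemma SigmD (X Y : T) (f g : Mor X Y) : Sigm (f + g) = Sigm f + Sigm g.
Proof. by case: shiftT => _ [_ [A _]]; apply: A. Qed.

Lemma Sigm0 (X Y : T) : Sigm (0 : Mor X Y) = 0.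
Proof.
have := SigmD (0 : Mor X Y) 0; rewrite addr0.
by move/(congr1 (fun z => z - Sigm (0 : Mor X Y))); rewrite subrr addrK.
Qed.

Lemma SigmN (X Y : T) (f : Mor X Y) : Sigm (- f) = - Sigm f.
Proof.
have E := SigmD f (- f); rewrite subrr Sigm0 in E.
by apply/eqP; rewrite -addr_eq0 addrC -E.
Qed.

Lemma Sigm_bij (X Y : T) : bijective (@Sigm T X Y).
Proof. by case: shiftT => _ [_ [_ [A _]]]; apply: A. Qed.

Lemma Sigm_inj (X Y : T) : injective (@Sigm T X Y).
Proof. exact: bij_inj (Sigm_bij X Y). Qed.

Lemma Sigm_surj (X Y : T) (y : Mor (Sig X) (Sig Y)) : exists x, y = Sigm x.
Proof. by case: (Sigm_bij X Y) => s _ sK; exists (s y); rewrite sK. Qed.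

Lemma shift_ess_surj (Y : T) : exists (X : T) (u : Mor (Sig X) Y), is_iso u.
Proof. by case: shiftT => _ [_ [_ [_ A]]]; apply: A. Qed.

Lemma exists_zero_obj : exists O : T, is_zero_obj O.
Proof. by case: (proj1 HT) => _ []. Qed.

Lemma dist_rotate (X Y Z : T) (f : Mor X Y) (g : Mor Y Z) (h : Mor Z (Sig X)) :
  dist f g h -> dist g h (- Sigm f).
Proof. exact: (tr2 f g h).1. Qed.

Lemma dist_comp0 (X Y Z : T) (f : Mor X Y) (g : Mor Y Z) (h : Mor Z (Sig X)) :
  dist f g h -> g \oc f = 0.
Proof.
move=> D; have [O HO] := exists_zero_obj.
have D0 : dist (idm X) (0 : Mor X O) 0 by case: tr1 => _ [A _]; apply: A.
have [c [<- _]] := tr3 D0 D (erefl (f \oc idm X)).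
exact: comp0r.
Qed.

Lemma dist_0_id (W : T) : exists X0 : T, dist (0 : Mor X0 W) (idm W) 0.
Proof.
have [O HO] := exists_zero_obj.
have [X0 [u [ui [uiK uK]]]] := shift_ess_surj O.
have iso_id (V : T) : is_iso (idm V) by exists (idm V); rewrite comp_idl.
have D0 : dist (idm W) (0 : Mor W O) 0 by case: tr1 => _ [A _]; apply: A.
have D1 : dist (idm W) (0 : Mor W (Sig X0)) 0.
  case: tr1 => A _; apply: (A _ _ _ _ _ _ _ _ _ _ _ _ (idm W) (idm W) ui) D0 => //.
  - by exists u.
  - by rewrite comp0r // comp0l.
  - by rewrite !comp0r // comp0l.
by exists X0; apply/tr2; rewrite Sigm0 oppr0.
Qed.

Lemma dist_hom_exact (X Y Z W : T) (f : Mor X Y) (g : Mor Y Z)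
    (h : Mor Z (Sig X)) (x : Mor Y W) :
  dist f g h -> x \oc f = 0 -> exists y : Mor Z W, x = y \oc g.
Proof.
move=> D xf0; have [X0 D0] := dist_0_id W.
have sq : x \oc f = (0 : Mor X0 W) \oc (0 : Mor X X0) by rewrite xf0 comp0r.
have [y [yg _]] := tr3 D D0 sq.
by exists y; rewrite yg comp_idl.
Qed.

Lemma dist_extend (X Y Z W : T) (f : Mor X Y) (g : Mor Y Z)
    (h : Mor Z (Sig X)) (a : Mor X W) :
  dist f g h -> Sigm a \oc h = 0 -> exists b : Mor Y W, a = b \oc f.
Proof.
move=> /dist_rotate /dist_rotate D ah0.
have [y Ey] := dist_hom_exact D ah0.
have [b Eb] := Sigm_surj y.
exists (- b); apply: Sigm_inj.
by rewrite Ey Eb SigmM SigmN compNr // compNl.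
Qed.

Lemma left_orth_dist (Z X Y S : T) (f : Mor X Y) (g : Mor Y S) (h : Mor S (Sig X)) :
  dist f g h -> left_orth Z X -> left_orth Z S -> left_orth Z Y.
Proof.
move=> D HX HS x; have [y ->] := dist_hom_exact D (HX (x \oc f)).
by rewrite (HS y) comp0l.
Qed.

Lemma left_orth_cone (Z X Y H : T) (d : Mor X Y) (p : Mor Y H) (q : Mor H (Sig X)) :
  dist d p q -> left_orth Z Y ->
  (forall w : Mor (Sig X) Z, exists w' : Mor (Sig Y) Z, w = w' \oc Sigm d) ->
  left_orth Z H.
Proof.
move=> D HY Hfac u.
have [w ->] := dist_hom_exact (dist_rotate D) (HY (u \oc p)).
have [w' ->] := Hfac w.
have dq0 : Sigm d \oc q = 0.
  apply/eqP; rewrite -oppr_eq0 -compNl //.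
  exact/eqP/(dist_comp0 (dist_rotate (dist_rotate D))).
by rewrite -compA // dq0 comp0r.
Qed.

Lemma precomp_Sigm_surj (X Y Z Z' : T) (d : Mor X Y) (v : Mor (Sig Z') Z) :
  is_iso v -> (forall w0 : Mor X Z', exists c, w0 = c \oc d) ->
  forall w : Mor (Sig X) Z, exists w' : Mor (Sig Y) Z, w = w' \oc Sigm d.
Proof.
case=> vi [vK viK] Hd w.
have [w0 Ew0] := Sigm_surj (vi \oc w).
have [c Ec] := Hd w0.
exists (v \oc Sigm c).
by rewrite -compA // -SigmM -Ec -Ew0 compA // viK comp_idl.
Qed.

End Triangulated.

Unset Implicit Arguments.

Theorem lemma3p9 (T : TriData) (HT : triangulated T)
    (Hcop : has_countable_coproducts T) (Z : T)
    (Y S : nat -> T) (f : forall i, Mor (Y i) (Y i.+1))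
    (g : forall i, Mor (Y i.+1) (S i)) (h : forall i, Mor (S i) (Sig (Y i))) :
  is_zero_obj (Y 0%N) ->
  (forall i, dist (f i) (g i) (h i)) ->
  (forall i, left_orth Z (S i)) ->
  forall (P : T) (iota : forall i, Mor (Y i) P), is_coproduct Y P iota ->
  forall d : Mor P P, (forall i, d \oc iota i = iota i - iota i.+1 \oc f i) ->
  forall (H : T) (p : Mor P H) (q : Mor H (Sig P)), dist d p q ->
  left_orth Z H.
Proof.
move=> HY0 Dtri HS P iota HcopP d Hd H p q Dd.
have HC : preadditive T := proj1 (proj1 HT).
have HY : forall i, left_orth Z (Y i).
  elim=> [|i IH]; first exact: (proj1 HY0 Z).
  exact (left_orth_dist HT (Dtri i) IH (HS i)).
have [Z' [v iso_v]] := shift_ess_surj HT Z.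
apply: (left_orth_cone HT Dd (left_orth_coproduct HC HcopP HY)).
apply: (precomp_Sigm_surj HT iso_v).
apply: (telescope_precomp_surj HC HcopP Hd) => i a.
apply: (dist_extend HT (Dtri i)).
exact: (left_orth_iso HC iso_v (HS i)).
Qed.
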